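(* Let $\Delta:\mathbb R\times(1,\infty)\to\mathbb R$ be defined by $\Delta(\alpha,\rho)=\frac1{\alpha(\alpha-1)}\Big[\frac{((\rho^\alpha-1)/\alpha)^{\alpha}((\rho-\rho^\alpha)/(1-\alpha))^{1-\alpha}}{\rho-1}-1\Big]$ for $\alpha\notin\{0,1\}$ and $\Delta(1,\rho)=\Delta(0,\rho)=\frac{\rho\ln\rho}{\rho-1}-\ln\frac{e\rho\ln\rho}{\rho-1}$. Then: (a) for every $\rho>1$, $\alpha\mapsto\Delta(\alpha,\rho)$ is convex on $\mathbb R$, symmetric around $\alpha=\tfrac12$ (i.e. $\Delta(1+\alpha,\rho)=\Delta(-\alpha,\rho)$), and has its global minimum at $\alpha=\tfrac12$; (b) $\alpha\Delta(\alpha,\rho)\le\beta\Delta(\beta,\rho)$ for $0<\alpha\le\beta<\infty$, and $(1-\beta)\Delta(\beta,\rho)\le(1-\alpha)\Delta(\alpha,\rho)$ for $-\infty<\alpha\le\beta<1$; (c) for every $\alpha\in\mathbb R$, $\rho\mapsto\Delta(\alpha,\rho)$ is monotonically increasing and continuous on $(1,\infty)$, and $\lim_{\rho\to1^+}\Delta(\alpha,\rho)=0$.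
   Context: $\Delta(\alpha,\rho)$ equals $\lim_{n\to\infty}\max_{Q\in\mathcal P_n(\rho)}D_{\mathrm A}^{(\alpha)}(Q\|U_n)$, where $\mathcal P_n(\rho)$ is the set of probability mass functions on $\{1,\dots,n\}$ with positive masses and max/min mass ratio at most $\rho$, $U_n$ is uniform, and $D_{\mathrm A}^{(\alpha)}(P\|Q)=\sum_xQ(x)u_\alpha(P(x)/Q(x))$ with $u_\alpha(t)=\frac{t^\alpha-\alpha(t-1)-1}{\alpha(\alpha-1)}$ ($\alpha\notin\{0,1\}$), $u_1(t)=t\ln t+1-t$, $u_0(t)=-\ln t$. *)

From Stdlib Require Import Reals Lra.
Open Scope R_scope.

(* Delta(alpha, rho) from the paper; meaningful for rho > 1.
   For alpha not in {0,1}, the bases (rho^a - 1)/a and (rho - rho^a)/(1-a)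
   are positive when rho > 1, so real powers (Rpower) are well defined. *)
Definition Dlt (a rho : R) : R :=
  if Req_EM_T a 0 then rho * ln rho / (rho - 1) - ln (exp 1 * rho * ln rho / (rho - 1))
  else if Req_EM_T a 1 then rho * ln rho / (rho - 1) - ln (exp 1 * rho * ln rho / (rho - 1))
  else / (a * (a - 1)) *
       (Rpower ((Rpower rho a - 1) / a) a
        * Rpower ((rho - Rpower rho a) / (1 - a)) (1 - a) / (rho - 1) - 1).

Definition convex_on_R (f : R -> R) : Prop :=
  forall x y t, 0 <= t <= 1 -> f (t * x + (1 - t) * y) <= t * f x + (1 - t) * f y.

(* For large [n] the maximising pmf takes only two values, in ratio [rho], so [Dlt a rho] is
   the maximum over [s] in [[1, rho]] of the divergence [two_level_div rho a s] of such a pmf,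
   attained at [s = Dlt_B a rho / Dlt_A a rho].  Each claim about [Dlt] then comes from a
   pointwise property of [u_a]: convexity in [a] (an integral representation whose integrand
   is convex in [a]), monotonicity of [a * u_a t] in [a], the duality
   [u_(1-a) t = t * u_a (1/t)], which corresponds to [s |-> rho / s], and convexity in [t],
   which makes a larger [rho] a mean-preserving spread.  Finally [0 <= Dlt a rho <=
   u_a (1/rho) + u_a rho] gives the limit at [rho = 1]. *)

From Stdlib Require Import Reals Lra.
From Coquelicot Require Import Coquelicot.
Open Scope R_scope.

Ltac positivity :=
  repeat (apply Rmult_lt_0_compat || apply Rinv_0_lt_compat || apply exp_pos); lra.

Definition ualpha (a t : R) : R :=
  if Req_EM_T a 0 then t - 1 - ln t
  else if Req_EM_T a 1 then t * ln t - t + 1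
  else (Rpower t a - 1 - a * (t - 1)) / (a * (a - 1)).

Lemma ualpha_0 t : ualpha 0 t = t - 1 - ln t.
Proof. unfold ualpha; destruct (Req_EM_T 0 0); [reflexivity | lra]. Qed.

Lemma ualpha_1 t : ualpha 1 t = t * ln t - t + 1.
Proof. unfold ualpha; destruct (Req_EM_T 1 0), (Req_EM_T 1 1); lra. Qed.

Lemma ualpha_gen a t : a <> 0 -> a <> 1 ->
  ualpha a t = (Rpower t a - 1 - a * (t - 1)) / (a * (a - 1)).
Proof. intros H0 H1; unfold ualpha; destruct (Req_EM_T a 0), (Req_EM_T a 1); tauto. Qed.

Lemma Rpower_pos x y : 0 < Rpower x y.
Proof. apply exp_pos. Qed.

Lemma Rpower_1_l a : Rpower 1 a = 1.
Proof. unfold Rpower; rewrite ln_1, Rmult_0_r; apply exp_0. Qed.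

Lemma Rpower_div x y a : 0 < x -> 0 < y -> Rpower (x / y) a = Rpower x a / Rpower y a.
Proof.
  intros Hx Hy; unfold Rpower; rewrite ln_div by auto.
  unfold Rdiv; rewrite <- exp_Ropp, <- exp_plus; f_equal; ring.
Qed.

Lemma Rpower_1_minus x a : 0 < x -> Rpower x (1 - a) = x / Rpower x a.
Proof.
  intros Hx; unfold Rminus; rewrite Rpower_plus, Rpower_1, Rpower_Ropp by auto; reflexivity.
Qed.

Lemma ualpha_at1 a : ualpha a 1 = 0.
Proof.
  unfold ualpha; rewrite ln_1, Rpower_1_l.
  destruct (Req_EM_T a 0); [ring|]; destruct (Req_EM_T a 1); [ring|].
  unfold Rdiv; ring.
Qed.

Lemma is_RInt_01_derive (F f : R -> R) :
  (forall x, is_derive F x (f x)) -> (forall x, continuous f x) ->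
  is_RInt f 0 1 (F 1 - F 0).
Proof. intros HF Hf; apply (is_RInt_derive (V := R_CompleteNormedModule)); auto. Qed.

(* Taylor's formula u_a(t) = int_1^t (t - x) x^(a-2) dx after the substitution
   t = e^z, x = e^(z m), which moves the bounds to [0, 1]. *)
Definition ualpha_kernel (a z m : R) : R := z * (exp (z * (1 - m)) - 1) * exp (z * m * a).

Lemma ualpha_kernel_continuous a z m : continuous (ualpha_kernel a z) m.
Proof.
  apply (ex_derive_continuous (V := R_NormedModule)); unfold ualpha_kernel; auto_derive; auto.
Qed.

Lemma is_RInt_ualpha_kernel a z : is_RInt (ualpha_kernel a z) 0 1 (ualpha a (exp z)).
Proof.
  pose proof (ualpha_kernel_continuous a z) as Hk.
  unfold ualpha, Rpower; rewrite ln_exp.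
  destruct (Req_EM_T a 0) as [->|Ha0].
  { replace (exp z - 1 - z) with ((- exp (z * (1 - 1)) - z * 1) - (- exp (z * (1 - 0)) - z * 0))
      by (replace (z * (1 - 1)) with 0 by ring; replace (z * (1 - 0)) with z by ring;
          rewrite exp_0; ring).
    apply (is_RInt_01_derive (fun m => - exp (z * (1 - m)) - z * m)); auto.
    intros x; auto_derive; auto.
    unfold ualpha_kernel; rewrite Rmult_0_r, exp_0, <- (Rminus_def 1 x); ring. }
  destruct (Req_EM_T a 1) as [->|Ha1].
  { replace (exp z * z - exp z + 1)
      with ((z * exp z * 1 - exp (z * 1)) - (z * exp z * 0 - exp (z * 0)))
      by (rewrite !Rmult_0_r, !Rmult_1_r, exp_0; ring).
    apply (is_RInt_01_derive (fun m => z * exp z * m - exp (z * m))); auto.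
    intros x; auto_derive; auto.
    unfold ualpha_kernel; rewrite !Rmult_1_r.
    replace (exp z) with (exp (z * (1 - x)) * exp (z * x)) by (rewrite <- exp_plus; f_equal; ring).
    ring. }
  set (F m := exp z * exp (z * (a - 1) * m) / (a - 1) - exp (z * a * m) / a).
  replace ((exp (a * z) - 1 - a * (exp z - 1)) / (a * (a - 1))) with (F 1 - F 0).
  2: { unfold F; rewrite !Rmult_0_r, exp_0, !Rmult_1_r, <- exp_plus.
       replace (z + z * (a - 1)) with (a * z) by ring; replace (z * a) with (a * z) by ring.
       field; split; lra. }
  apply (is_RInt_01_derive F); auto. intros x; unfold F; auto_derive; [auto|].
  unfold ualpha_kernel.
  replace (exp (z * (1 - x))) with (exp z * exp (z * (a - 1) * x) / exp (z * a * x)).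
  - replace (z * x * a) with (z * a * x) by ring.
    field; repeat split; try lra; apply Rgt_not_eq, exp_pos.
  - unfold Rdiv; rewrite <- exp_Ropp, <- !exp_plus; f_equal; ring.
Qed.

Lemma exp_le_compat x y : x <= y -> exp x <= exp y.
Proof. intros [Hlt | ->]; [left; apply exp_increasing|]; lra. Qed.

Lemma exp_convex l u v : 0 <= l <= 1 ->
  exp (l * u + (1 - l) * v) <= l * exp u + (1 - l) * exp v.
Proof.
  intros Hl; set (m := l * u + (1 - l) * v).
  assert (Hu : exp m * (1 + (u - m)) <= exp u).
  { replace (exp u) with (exp m * exp (u - m)) by (rewrite <- exp_plus; f_equal; ring).
    apply Rmult_le_compat_l; [left; apply exp_pos | apply exp_ineq1_le]. }
  assert (Hv : exp m * (1 + (v - m)) <= exp v).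
  { replace (exp v) with (exp m * exp (v - m)) by (rewrite <- exp_plus; f_equal; ring).
    apply Rmult_le_compat_l; [left; apply exp_pos | apply exp_ineq1_le]. }
  assert (l * (exp m * (1 + (u - m))) + (1 - l) * (exp m * (1 + (v - m))) = exp m)
    by (unfold m; ring).
  nra.
Qed.

Lemma mul_exp_sub1_nonneg z c : 0 <= c -> 0 <= z * (exp (z * c) - 1).
Proof.
  intros Hc; rewrite <- exp_0.
  destruct (Rle_dec 0 z) as [Hz|Hz].
  - apply Rmult_le_pos; [lra|]. pose proof (exp_le_compat 0 (z * c)); nra.
  - pose proof (exp_le_compat (z * c) 0); nra.
Qed.

Lemma ualpha_nonneg a t : 0 < t -> 0 <= ualpha a t.
Proof.
  intros Ht; rewrite <- (exp_ln t Ht).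
  replace 0 with (scal (1 - 0) 0 : R) by (change (scal (1 - 0) 0) with ((1 - 0) * 0); ring).
  apply (is_RInt_le (fun _ => 0) (ualpha_kernel a (ln t)) 0 1);
    [lra | apply (is_RInt_const (V := R_NormedModule)) | apply is_RInt_ualpha_kernel |].
  intros m Hm; unfold ualpha_kernel.
    apply Rmult_le_pos; [apply mul_exp_sub1_nonneg; lra | left; apply exp_pos].
Qed.

Lemma ualpha_convex_alpha a b l t : 0 < t -> 0 <= l <= 1 ->
  ualpha (l * a + (1 - l) * b) t <= l * ualpha a t + (1 - l) * ualpha b t.
Proof.
  intros Ht Hl; rewrite <- (exp_ln t Ht); set (z := ln t).
  apply (is_RInt_le (ualpha_kernel (l * a + (1 - l) * b) z)
           (fun m => l * ualpha_kernel a z m + (1 - l) * ualpha_kernel b z m) 0 1);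
    [lra | apply is_RInt_ualpha_kernel | |].
  - apply (is_RInt_plus (V := R_NormedModule)); apply (is_RInt_scal (V := R_NormedModule));
      apply is_RInt_ualpha_kernel.
  - intros m Hm; unfold ualpha_kernel.
    pose proof (mul_exp_sub1_nonneg z (1 - m) ltac:(lra)).
    pose proof (exp_convex l (z * m * a) (z * m * b) Hl).
    replace (z * m * (l * a + (1 - l) * b)) with (l * (z * m * a) + (1 - l) * (z * m * b)) by ring.
    nra.
Qed.

Definition alpha_slope (t a : R) : R :=
  if Req_EM_T a 1 then t * ln t else (Rpower t a - t) / (a - 1).

Lemma is_RInt_alpha_slope a z :
  is_RInt (fun m => z * exp (z * (1 + m * (a - 1)))) 0 1 (alpha_slope (exp z) a).
Proof.
  unfold alpha_slope, Rpower; rewrite ln_exp.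
  destruct (Req_EM_T a 1) as [->|Ha1].
  - replace (exp z * z) with (z * exp z * 1 - z * exp z * 0) by ring.
    apply (is_RInt_01_derive (fun m => z * exp z * m)).
    + intros x; auto_derive; auto. replace (z * (1 + x * (1 - 1))) with z by ring; ring.
    + intros x; apply (ex_derive_continuous (V := R_NormedModule)); auto_derive; auto.
  - set (F m := exp (z * (1 + m * (a - 1))) / (a - 1)).
    replace ((exp (a * z) - exp z) / (a - 1)) with (F 1 - F 0)
      by (unfold F; replace (z * (1 + 1 * (a - 1))) with (a * z) by ring;
          replace (z * (1 + 0 * (a - 1))) with z by ring; field; lra).
    apply (is_RInt_01_derive F).
    + intros x; unfold F; auto_derive; [auto|]. field; lra.
    + intros x; apply (ex_derive_continuous (V := R_NormedModule)); auto_derive; auto.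
Qed.

Lemma alpha_slope_mono t a b : 0 < t -> a <= b -> alpha_slope t a <= alpha_slope t b.
Proof.
  intros Ht Hab; rewrite <- (exp_ln t Ht); set (z := ln t).
  apply (is_RInt_le _ _ 0 1 _ _ ltac:(lra) (is_RInt_alpha_slope a z) (is_RInt_alpha_slope b z)).
  intros m Hm.
  assert (E : z * (1 + m * (b - 1)) - z * (1 + m * (a - 1)) = z * (m * (b - a))) by ring.
  assert (0 <= m * (b - a)) by (apply Rmult_le_pos; lra).
  destruct (Rle_dec 0 z).
  - apply Rmult_le_compat_l; [lra|]. apply exp_le_compat.
    assert (0 <= z * (m * (b - a))) by (apply Rmult_le_pos; lra); lra.
  - apply Rmult_le_compat_neg_l; [lra|]. apply exp_le_compat. nra.
Qed.

Lemma mul_ualpha_eq a t : 0 < t -> a * ualpha a t = alpha_slope t a - (t - 1).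
Proof.
  intros Ht; unfold alpha_slope.
  destruct (Req_EM_T a 1) as [->|Ha1]; [rewrite ualpha_1; ring|].
  destruct (Req_EM_T a 0) as [->|Ha0]; [rewrite Rpower_O by lra; field|].
  rewrite ualpha_gen by auto; field; split; lra.
Qed.

Lemma mul_ualpha_mono a b t : 0 < t -> a <= b -> a * ualpha a t <= b * ualpha b t.
Proof.
  intros Ht Hab; rewrite !mul_ualpha_eq by auto.
  pose proof (alpha_slope_mono t a b Ht Hab); lra.
Qed.

Definition ualpha_deriv (a v : R) : R :=
  if Req_EM_T a 0 then 1 - 1 / v
  else if Req_EM_T a 1 then ln v
  else (Rpower v (a - 1) - 1) / (a - 1).

Lemma ualpha_bregman a t v : 0 < t -> 0 < v ->
  ualpha a t - ualpha a v - ualpha_deriv a v * (t - v) = Rpower v a * ualpha a (t / v).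
Proof.
  intros Ht Hv; unfold ualpha_deriv.
  destruct (Req_EM_T a 0) as [->|Ha0].
  { rewrite !ualpha_0, Rpower_O, ln_div by auto; field; lra. }
  destruct (Req_EM_T a 1) as [->|Ha1].
  { rewrite !ualpha_1, Rpower_1, ln_div by auto; field; lra. }
  rewrite !ualpha_gen, Rpower_div by auto.
  replace (Rpower v (a - 1)) with (Rpower v a / v)
    by (unfold Rminus; rewrite Rpower_plus, Rpower_Ropp, Rpower_1 by auto; reflexivity).
  pose proof (Rpower_pos v a).
  field; repeat split; lra.
Qed.

Lemma ualpha_tangent a t v : 0 < t -> 0 < v ->
  ualpha a v + ualpha_deriv a v * (t - v) <= ualpha a t.
Proof.
  intros Ht Hv; pose proof (ualpha_bregman a t v Ht Hv).
  pose proof (Rpower_pos v a); pose proof (ualpha_nonneg a (t / v) ltac:(positivity)).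
  nra.
Qed.

Lemma ualpha_chord a L v H : 0 < L -> L <= v <= H ->
  (H - L) * ualpha a v <= (H - v) * ualpha a L + (v - L) * ualpha a H.
Proof.
  intros HL Hv.
  pose proof (ualpha_tangent a L v HL ltac:(lra)).
  pose proof (ualpha_tangent a H v ltac:(lra) ltac:(lra)).
  assert ((H - v) * (ualpha a v + ualpha_deriv a v * (L - v)) <= (H - v) * ualpha a L)
    by (apply Rmult_le_compat_l; lra).
  assert ((v - L) * (ualpha a v + ualpha_deriv a v * (H - v)) <= (v - L) * ualpha a H)
    by (apply Rmult_le_compat_l; lra).
  nra.
Qed.

Lemma ualpha_le_ends a L v H : 0 < L -> L <= v <= H -> ualpha a v <= ualpha a L + ualpha a H.
Proof.
  intros HL Hv; destruct (Req_dec L H) as [<-|HLH].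
  { replace v with L by lra; pose proof (ualpha_nonneg a L HL); lra. }
  pose proof (ualpha_chord a L v H HL Hv).
  pose proof (ualpha_nonneg a L HL); pose proof (ualpha_nonneg a H ltac:(lra)).
  apply Rmult_le_reg_l with (H - L); [lra|].
  assert ((H - v) * ualpha a L <= (H - L) * ualpha a L) by (apply Rmult_le_compat_r; lra).
  assert ((v - L) * ualpha a H <= (H - L) * ualpha a H) by (apply Rmult_le_compat_r; lra).
  lra.
Qed.

Lemma ualpha_one_minus a t : 0 < t -> ualpha (1 - a) t = t * ualpha a (1 / t).
Proof.
  intros Ht; assert (Hl : ln (1 / t) = - ln t) by (rewrite ln_div, ln_1 by lra; ring).
  destruct (Req_EM_T a 0) as [->|Ha0].
  { rewrite Rminus_0_r, ualpha_1, ualpha_0, Hl; field; lra. }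
  destruct (Req_EM_T a 1) as [->|Ha1].
  { rewrite Rminus_diag, ualpha_1, ualpha_0, Hl; field; lra. }
  rewrite !ualpha_gen, Rpower_div, Rpower_1_l, Rpower_1_minus by lra.
  pose proof (Rpower_pos t a).
  field; repeat split; lra.
Qed.

(* For a pmf [Q] on [n] points taking the value [rho * c] on a fraction [p] of them and [c]
   on the rest, [n * Q] takes the values [rho / s] and [1 / s] with [s = 1 + p * (rho - 1)],
   so [two_level_div rho a s] is [D_A^(a) (Q || U_n)]. *)
Definition two_level_div (rho a s : R) : R :=
  (s - 1) / (rho - 1) * ualpha a (rho / s) + (1 - (s - 1) / (rho - 1)) * ualpha a (1 / s).

Definition Dlt_A (a rho : R) : R :=
  if Req_EM_T a 0 then ln rho else (Rpower rho a - 1) / a.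

Definition Dlt_B (a rho : R) : R :=
  if Req_EM_T a 1 then rho * ln rho else (rho - Rpower rho a) / (1 - a).

Lemma ln_pos x : 1 < x -> 0 < ln x.
Proof. intros Hx; rewrite <- ln_1; apply ln_increasing; lra. Qed.

Lemma Rpower_slope_pos rho a b : 1 < rho -> a <> b -> 0 < (Rpower rho a - Rpower rho b) / (a - b).
Proof.
  intros Hr Hab; destruct (Rlt_dec b a).
  - apply Rdiv_lt_0_compat; [pose proof (Rpower_lt rho b a Hr) |]; lra.
  - replace ((Rpower rho a - Rpower rho b) / (a - b)) with ((Rpower rho b - Rpower rho a) / (b - a))
      by (field; lra).
    apply Rdiv_lt_0_compat; [pose proof (Rpower_lt rho a b Hr) |]; lra.
Qed.

Lemma Dlt_A_pos a rho : 1 < rho -> 0 < Dlt_A a rho.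
Proof.
  intros Hr; unfold Dlt_A; destruct (Req_EM_T a 0); [apply ln_pos; auto|].
  pose proof (Rpower_slope_pos rho a 0 Hr n) as H.
  rewrite Rpower_O, Rminus_0_r in H by lra; exact H.
Qed.

Lemma Dlt_B_pos a rho : 1 < rho -> 0 < Dlt_B a rho.
Proof.
  intros Hr; unfold Dlt_B; destruct (Req_EM_T a 1).
  - apply Rmult_lt_0_compat; [lra | apply ln_pos; auto].
  - pose proof (Rpower_slope_pos rho 1 a Hr (not_eq_sym n)) as H.
    rewrite Rpower_1 in H by lra; exact H.
Qed.

Lemma Dlt_B_sub_A a rho : 0 < rho -> Dlt_B a rho - Dlt_A a rho = ualpha a rho.
Proof.
  intros Hr; unfold Dlt_A, Dlt_B.
  destruct (Req_EM_T a 0) as [->|Ha0].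
  { rewrite ualpha_0; destruct (Req_EM_T 0 1); [lra|]. rewrite Rpower_O by lra; field. }
  destruct (Req_EM_T a 1) as [->|Ha1].
  { rewrite ualpha_1, Rpower_1 by lra; field. }
  rewrite ualpha_gen by auto; field; split; lra.
Qed.

Lemma mul_Dlt_A_sub_B a rho : 0 < rho ->
  rho * Dlt_A a rho - Dlt_B a rho = rho * Rpower rho a * ualpha a (1 / rho).
Proof.
  intros Hr; assert (Hl : ln (1 / rho) = - ln rho) by (rewrite ln_div, ln_1 by lra; ring).
  unfold Dlt_A, Dlt_B.
  destruct (Req_EM_T a 0) as [->|Ha0].
  { rewrite ualpha_0, Hl; destruct (Req_EM_T 0 1); [lra|]. rewrite Rpower_O by lra; field; lra. }
  destruct (Req_EM_T a 1) as [->|Ha1].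
  { rewrite ualpha_1, Hl, Rpower_1 by lra; field; lra. }
  rewrite ualpha_gen, Rpower_div, Rpower_1_l by (auto || lra).
  pose proof (Rpower_pos rho a); field; repeat split; lra.
Qed.

Lemma Dlt_gen a rho : a <> 0 -> a <> 1 ->
  Dlt a rho = / (a * (a - 1)) *
    (Rpower (Dlt_A a rho) a * Rpower (Dlt_B a rho) (1 - a) / (rho - 1) - 1).
Proof.
  intros H0 H1; unfold Dlt, Dlt_A, Dlt_B.
  destruct (Req_EM_T a 0), (Req_EM_T a 1); tauto.
Qed.

Lemma Dlt_0_1 a rho : a = 0 \/ a = 1 -> 1 < rho ->
  Dlt a rho = ln rho / (rho - 1) - 1 - ln (ln rho / (rho - 1)).
Proof.
  intros Ha Hr; pose proof (ln_pos rho Hr).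
  assert (E : rho * ln rho / (rho - 1) - ln (exp 1 * rho * ln rho / (rho - 1))
              = ln rho / (rho - 1) - 1 - ln (ln rho / (rho - 1))).
  { unfold Rdiv; rewrite !ln_mult, ln_exp, ln_Rinv by positivity.
    field; lra. }
  unfold Dlt; destruct Ha as [->| ->].
  - destruct (Req_EM_T 0 0); [exact E | lra].
  - destruct (Req_EM_T 1 0), (Req_EM_T 1 1); [lra | exact E | lra | lra].
Qed.

Lemma Dlt_sub_two_level_div a rho s : 1 < rho -> 0 < s ->
  Dlt a rho - two_level_div rho a s =
  Dlt_B a rho * ualpha a (s * Dlt_A a rho / Dlt_B a rho) / ((rho - 1) * Rpower s a).
Proof.
  intros Hr Hs; pose proof (Dlt_A_pos a rho Hr) as HA; pose proof (Dlt_B_pos a rho Hr) as HB.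
  pose proof (ln_pos rho Hr) as Hl; unfold two_level_div.
  destruct (Req_EM_T a 0) as [->|Ha0].
  { rewrite Dlt_0_1, !ualpha_0, Rpower_O by lra.
    unfold Dlt_A, Dlt_B in *; destruct (Req_EM_T 0 0); [|lra]; destruct (Req_EM_T 0 1); [lra|].
    rewrite Rpower_O in * by lra; replace ((rho - 1) / (1 - 0)) with (rho - 1) by field.
    unfold Rdiv; rewrite !ln_mult, !ln_Rinv, ln_1 by positivity.
    field; lra. }
  destruct (Req_EM_T a 1) as [->|Ha1].
  { rewrite Dlt_0_1, !ualpha_1, Rpower_1 by lra.
    unfold Dlt_A, Dlt_B in *; destruct (Req_EM_T 1 0); [lra|]; destruct (Req_EM_T 1 1); [|lra].
    rewrite Rpower_1 in * by lra; replace ((rho - 1) / 1) with (rho - 1) by field.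
    unfold Rdiv; rewrite !ln_mult, !ln_Rinv, ln_1, ln_mult by positivity.
    field; lra. }
  rewrite Dlt_gen, !ualpha_gen, !Rpower_div, Rpower_1_l, <- Rpower_mult_distr, Rpower_1_minus
    by positivity.
  pose proof (Rpower_pos s a); pose proof (Rpower_pos (Dlt_B a rho) a).
  unfold Dlt_A, Dlt_B in *; destruct (Req_EM_T a 0), (Req_EM_T a 1); try tauto.
  set (R := Rpower rho a) in *.
  assert (rho - R <> 0) by (intro E; rewrite E in HB; unfold Rdiv in HB; lra).
  field; repeat split; lra.
Qed.

Lemma two_level_div_le_Dlt a rho s : 1 < rho -> 0 < s -> two_level_div rho a s <= Dlt a rho.
Proof.
  intros Hr Hs; pose proof (Dlt_sub_two_level_div a rho s Hr Hs) as E.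
  pose proof (Dlt_A_pos a rho Hr); pose proof (Dlt_B_pos a rho Hr); pose proof (Rpower_pos s a).
  assert (0 <= Dlt_B a rho * ualpha a (s * Dlt_A a rho / Dlt_B a rho) / ((rho - 1) * Rpower s a)).
  { apply Rdiv_le_0_compat; [apply Rmult_le_pos; [lra | apply ualpha_nonneg] | ]; positivity. }
  lra.
Qed.

Lemma Dlt_attained a rho : 1 < rho ->
  exists s, 1 <= s <= rho /\ two_level_div rho a s = Dlt a rho.
Proof.
  intros Hr; pose proof (Dlt_A_pos a rho Hr) as HA; pose proof (Dlt_B_pos a rho Hr) as HB.
  exists (Dlt_B a rho / Dlt_A a rho); split.
  - assert (Dlt_A a rho <= Dlt_B a rho).
    { pose proof (Dlt_B_sub_A a rho ltac:(lra)); pose proof (ualpha_nonneg a rho ltac:(lra)); lra. }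
    assert (Dlt_B a rho <= rho * Dlt_A a rho).
    { pose proof (mul_Dlt_A_sub_B a rho ltac:(lra)); pose proof (Rpower_pos rho a).
      pose proof (ualpha_nonneg a (1 / rho) ltac:(positivity)).
      assert (0 <= rho * Rpower rho a * ualpha a (1 / rho)) by (repeat apply Rmult_le_pos; lra).
      lra. }
    replace (Dlt_B a rho / Dlt_A a rho) with (Dlt_B a rho * / Dlt_A a rho) by reflexivity.
    split; apply Rmult_le_reg_r with (Dlt_A a rho); try exact HA;
      rewrite Rmult_assoc, Rinv_l by lra; lra.
  - pose proof (Dlt_sub_two_level_div a rho (Dlt_B a rho / Dlt_A a rho) Hr ltac:(positivity)) as E.
    replace (Dlt_B a rho / Dlt_A a rho * Dlt_A a rho / Dlt_B a rho) with 1 in E by (field; lra).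
    rewrite ualpha_at1, Rmult_0_r in E; unfold Rdiv in E; rewrite Rmult_0_l in E; lra.
Qed.

Lemma two_level_weight_range rho s : 1 < rho -> 1 <= s <= rho -> 0 <= (s - 1) / (rho - 1) <= 1.
Proof.
  intros Hr Hs; split; [apply Rdiv_le_0_compat; lra|].
  apply Rmult_le_reg_r with (rho - 1); [lra|]; field_simplify; lra.
Qed.

Lemma two_level_div_convex_alpha rho s x y l : 1 < rho -> 1 <= s <= rho -> 0 <= l <= 1 ->
  two_level_div rho (l * x + (1 - l) * y) s
  <= l * two_level_div rho x s + (1 - l) * two_level_div rho y s.
Proof.
  intros Hr Hs Hl; unfold two_level_div.
  pose proof (two_level_weight_range rho s Hr Hs); set (p := (s - 1) / (rho - 1)) in *.
  pose proof (ualpha_convex_alpha x y l (rho / s) ltac:(positivity) Hl).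
  pose proof (ualpha_convex_alpha x y l (1 / s) ltac:(positivity) Hl).
  nra.
Qed.

Lemma Dlt_convex rho : 1 < rho -> convex_on_R (fun a => Dlt a rho).
Proof.
  intros Hr x y l Hl.
  destruct (Dlt_attained (l * x + (1 - l) * y) rho Hr) as [s [Hs <-]].
  pose proof (two_level_div_le_Dlt x rho s Hr ltac:(lra)).
  pose proof (two_level_div_le_Dlt y rho s Hr ltac:(lra)).
  pose proof (two_level_div_convex_alpha rho s x y l Hr Hs Hl).
  nra.
Qed.

Lemma two_level_div_one_minus rho a s : 1 < rho -> 0 < s ->
  two_level_div rho (1 - a) s = two_level_div rho a (rho / s).
Proof.
  intros Hr Hs; unfold two_level_div.
  rewrite !ualpha_one_minus by positivity.
  replace (1 / (rho / s)) with (s / rho) by (field; lra).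
  replace (1 / (1 / s)) with s by (field; lra).
  replace (rho / (rho / s)) with s by (field; lra).
  field; lra.
Qed.

Lemma Dlt_one_minus a rho : 1 < rho -> Dlt (1 - a) rho = Dlt a rho.
Proof.
  intros Hr.
  assert (Hle : forall b, Dlt (1 - b) rho <= Dlt b rho).
  { intros b; destruct (Dlt_attained (1 - b) rho Hr) as [s [Hs <-]].
    rewrite two_level_div_one_minus by lra; apply two_level_div_le_Dlt; positivity. }
  apply Rle_antisym; [apply Hle|].
  pose proof (Hle (1 - a)) as H; replace (1 - (1 - a)) with a in H by ring; exact H.
Qed.

Lemma Dlt_min_half a rho : 1 < rho -> Dlt (1 / 2) rho <= Dlt a rho.
Proof.
  intros Hr; pose proof (Dlt_convex rho Hr a (1 - a) (1 / 2) ltac:(lra)) as H; cbv beta in H.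
  replace (1 / 2 * a + (1 - 1 / 2) * (1 - a)) with (1 / 2) in H by field.
  rewrite Dlt_one_minus in H by auto; lra.
Qed.

Lemma mul_two_level_div_mono rho s a b : 1 < rho -> 1 <= s <= rho -> a <= b ->
  a * two_level_div rho a s <= b * two_level_div rho b s.
Proof.
  intros Hr Hs Hab; unfold two_level_div.
  pose proof (two_level_weight_range rho s Hr Hs); set (p := (s - 1) / (rho - 1)) in *.
  pose proof (mul_ualpha_mono a b (rho / s) ltac:(positivity) Hab).
  pose proof (mul_ualpha_mono a b (1 / s) ltac:(positivity) Hab).
  nra.
Qed.

Lemma mul_Dlt_mono a b rho : 1 < rho -> 0 <= b -> a <= b -> a * Dlt a rho <= b * Dlt b rho.
Proof.
  intros Hr Hb Hab; destruct (Dlt_attained a rho Hr) as [s [Hs <-]].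
  pose proof (mul_two_level_div_mono rho s a b Hr Hs Hab).
  pose proof (two_level_div_le_Dlt b rho s Hr ltac:(lra)).
  nra.
Qed.

Lemma one_minus_mul_Dlt_mono a b rho : 1 < rho -> a <= 1 -> a <= b ->
  (1 - b) * Dlt b rho <= (1 - a) * Dlt a rho.
Proof.
  intros Hr Ha Hab.
  rewrite <- (Dlt_one_minus a rho), <- (Dlt_one_minus b rho) by auto.
  apply mul_Dlt_mono; lra.
Qed.

(* Both two-level pmfs have mean one and the same upper value [r1 / s]; the second one moves the
   lower value [1 / s] down to [r1 / (r2 * s)], so it is a mean-preserving spread of the first. *)
Lemma two_level_div_spread a r1 r2 s : 1 < r1 -> r1 <= r2 -> 1 <= s <= r1 ->
  two_level_div r1 a s <= two_level_div r2 a (r2 * s / r1).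
Proof.
  intros Hr1 Hr12 Hs; unfold two_level_div.
  replace (r2 / (r2 * s / r1)) with (r1 / s) by (field; lra).
  replace (1 / (r2 * s / r1)) with (r1 / r2 * (1 / s)) by (field; lra).
  pose proof (two_level_weight_range r1 s Hr1 Hs); set (p := (s - 1) / (r1 - 1)) in *.
  set (hi := r1 / s); set (v := 1 / s); set (lo := r1 / r2 * v).
  assert (Hv : 0 < v) by (unfold v; positivity).
  assert (Hq : 0 < r1 / r2 <= 1)
    by (split; [positivity | apply Rmult_le_reg_r with r2; field_simplify; lra]).
  assert (Hlo : 0 < lo <= v) by (unfold lo; split; [positivity | nra]).
  assert (Hhi : v < hi) by (unfold v, hi; apply Rmult_lt_compat_r; [positivity | lra]).
  pose proof (ualpha_chord a lo v hi ltac:(lra) ltac:(lra)) as C.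
  assert (E : (r2 * s / r1 - 1) / (r2 - 1) * ualpha a hi
              + (1 - (r2 * s / r1 - 1) / (r2 - 1)) * ualpha a lo
              - (p * ualpha a hi + (1 - p) * ualpha a v)
              = (1 - p) / (hi - lo)
                * ((hi - v) * ualpha a lo + (v - lo) * ualpha a hi - (hi - lo) * ualpha a v)).
  { unfold p, hi, lo, v; field; repeat split; try lra; nra. }
  assert (0 <= (1 - p) / (hi - lo)) by (apply Rdiv_le_0_compat; lra).
  nra.
Qed.

Lemma Dlt_rho_mono a r1 r2 : 1 < r1 -> r1 <= r2 -> Dlt a r1 <= Dlt a r2.
Proof.
  intros Hr1 Hr12; destruct (Dlt_attained a r1 Hr1) as [s [Hs <-]].
  eapply Rle_trans; [apply two_level_div_spread; eauto|].
  apply two_level_div_le_Dlt; [lra | positivity].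
Qed.

Lemma Dlt_continuous a rho : 1 < rho -> continuity_pt (fun r => Dlt a r) rho.
Proof.
  intros Hr; apply continuity_pt_filterlim, (ex_derive_continuous (V := R_NormedModule)).
  pose proof (ln_pos rho Hr).
  assert (0 < exp 1 * rho * ln rho * / (rho + - (1))) by positivity.
  unfold Dlt; destruct (Req_EM_T a 0); [|destruct (Req_EM_T a 1)];
    [auto_derive; repeat split; lra .. |].
  pose proof (Dlt_A_pos a rho Hr) as HA; pose proof (Dlt_B_pos a rho Hr) as HB.
  unfold Dlt_A, Dlt_B, Rpower, Rminus, Rdiv in *.
  destruct (Req_EM_T a 0), (Req_EM_T a 1); try tauto.
  auto_derive; repeat split; lra.
Qed.

Lemma Dlt_nonneg a rho : 1 < rho -> 0 <= Dlt a rho.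
Proof.
  intros Hr; pose proof (two_level_div_le_Dlt a rho 1 Hr Rlt_0_1) as H.
  unfold two_level_div in H; rewrite !Rdiv_1_r, ualpha_at1 in H.
  replace ((1 - 1) / (rho - 1)) with 0 in H by (field; lra); lra.
Qed.

Lemma Dlt_le_ualpha_sum a rho : 1 < rho -> Dlt a rho <= ualpha a (1 / rho) + ualpha a rho.
Proof.
  intros Hr; destruct (Dlt_attained a rho Hr) as [s [Hs <-]]; unfold two_level_div.
  pose proof (two_level_weight_range rho s Hr Hs); set (p := (s - 1) / (rho - 1)) in *.
  assert (Hends : forall v, 1 / rho <= v <= rho -> ualpha a v <= ualpha a (1 / rho) + ualpha a rho).
  { intros v Hv; apply ualpha_le_ends; [positivity | exact Hv]. }
  assert (1 / s <= 1) by (unfold Rdiv; rewrite Rmult_1_l, <- Rinv_1; apply Rinv_le_contravar; lra).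
  assert (1 / rho <= 1 / s) by (unfold Rdiv; rewrite !Rmult_1_l; apply Rinv_le_contravar; lra).
  assert (rho / s = rho * (1 / s)) by (field; lra).
  assert (1 <= rho / s)
    by (apply Rmult_le_reg_r with s; [lra|]; unfold Rdiv; rewrite Rmult_assoc, Rinv_l; lra).
  pose proof (Hends (rho / s) ltac:(nra)); pose proof (Hends (1 / s) ltac:(lra)).
  nra.
Qed.

Lemma ualpha_ex_derive a t : 0 < t -> ex_derive (ualpha a) t.
Proof.
  intros Ht; unfold ualpha, Rpower.
  destruct (Req_EM_T a 0); [|destruct (Req_EM_T a 1)]; auto_derive; repeat split; lra.
Qed.

Lemma ualpha_sum_continuous_1 a : continuity_pt (fun r => ualpha a (1 / r) + ualpha a r) 1.
Proof.
  apply continuity_pt_filterlim.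
  apply (ex_derive_continuous (K := R_AbsRing) (V := R_NormedModule)
           (fun r => ualpha a (1 / r) + ualpha a r)).
  apply (ex_derive_plus (K := R_AbsRing) (V := R_NormedModule)
           (fun r => ualpha a (1 / r)) (ualpha a)).
  - apply (ex_derive_comp (K := R_AbsRing) (V := R_NormedModule) (ualpha a) (fun r => 1 / r));
      [apply ualpha_ex_derive; cbn; lra | auto_derive; lra].
  - apply ualpha_ex_derive; lra.
Qed.

Lemma Dlt_lim_1 a : limit1_in (fun r => Dlt a r) (fun r => 1 < r) 0 1.
Proof.
  intros eps Heps.
  destruct (ualpha_sum_continuous_1 a eps Heps) as [delta [Hdelta Hcont]].
  exists delta; split; [exact Hdelta|]; intros r [Hr Hd]; cbn in *.
  pose proof (Hcont r (conj (conj I (Rlt_not_eq _ _ Hr)) Hd)) as H; cbn in H.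
  rewrite Rdiv_1_r, ualpha_at1, Rplus_0_r in H.
  pose proof (Dlt_nonneg a r Hr); pose proof (Dlt_le_ualpha_sum a r Hr).
  unfold R_dist in *; rewrite Rminus_0_r in *; rewrite Rabs_right in * by lra; lra.
Qed.

Theorem theorem9 :
  (* (a) *)
  (forall rho, 1 < rho ->
     convex_on_R (fun a => Dlt a rho)
     /\ (forall a, Dlt (1 + a) rho = Dlt (- a) rho)
     /\ (forall a, Dlt (1 / 2) rho <= Dlt a rho))
  /\
  (* (b) *)
  (forall rho, 1 < rho ->
     (forall a b, 0 < a -> a <= b -> a * Dlt a rho <= b * Dlt b rho)
     /\ (forall a b, a <= b -> b < 1 ->
           (1 - b) * Dlt b rho <= (1 - a) * Dlt a rho))
  /\
  (* (c) *)
  (forall a,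
     (forall r1 r2, 1 < r1 -> r1 <= r2 -> Dlt a r1 <= Dlt a r2)
     /\ (forall rho, 1 < rho -> continuity_pt (fun r => Dlt a r) rho)
     /\ limit1_in (fun r => Dlt a r) (fun r => 1 < r) 0 1).
Proof.
  split; [|split].
  - intros rho Hr; split; [|split].
    + apply Dlt_convex, Hr.
    + intros a; rewrite <- (Dlt_one_minus (- a)) by exact Hr; f_equal; ring.
    + intros a; apply Dlt_min_half, Hr.
  - intros rho Hr; split.
    + intros a b Ha Hab; apply mul_Dlt_mono; lra.
    + intros a b Hab Hb; apply one_minus_mul_Dlt_mono; lra.
  - intros a; split; [|split].
    + intros r1 r2; apply Dlt_rho_mono.
    + intros rho; apply Dlt_continuous.
    + apply Dlt_lim_1.
Qed.
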